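(* Let $V$ be a finite-dimensional vector space over $\mathbb{F}_q$, $\mathcal{F}$ a projective point family in $V$ of size $\nu$, $\varphi:\mathbb{F}_q^\nu\to V$ a parent function of $\mathcal{F}$ with parent code $P=\ker\varphi$, and $r=\lfloor (d_H(P)-1)/2\rfloor$. Let $x\in\mathbb{F}_q^\nu$. Then for every integer $t\le r$, $\varphi$ restricts to a bijection from the Hamming sphere $S^H_t(x)=\{y:d_H(x,y)=t\}\subseteq\mathbb{F}_q^\nu$ onto the sphere $S^{\mathcal{F}}_t(\varphi(x))=\{\varphi(x)+v: v\in V,\ \operatorname{wt}_{\mathcal{F}}(v)=t\}\subseteq V$.
   Context: A projective point family is a set of pairwise linearly independent nonzero vectors; $\operatorname{wt}_{\mathcal{F}}(v)=\min(\{|I|:I\subseteq\mathcal{F},v\in\langle I\rangle\}\cup\{\infty\})$. A parent function of $\mathcal{F}$ is a linear map $\varphi:\mathbb{F}_q^\nu\to V$ with $\{\langle\varphi(e_i)\rangle\}_{i=1}^\nu=\{\langle f\rangle: f\in\mathcal{F}\}$. $d_H(P)$ is the minimum Hamming distance between distinct elements of $P$. *)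

From HB Require Import structures.
From mathcomp Require Import all_boot all_order all_algebra all_field.
Set Implicit Arguments. Unset Strict Implicit. Unset Printing Implicit Defensive.
Import GRing.Theory.
Local Open Scope ring_scope.

Section Defs.
Variable F : finFieldType.

Definition proj_point_family (V : vectType F) (fam : seq V) : Prop :=
  uniq fam /\ (forall f, f \in fam -> f != 0) /\
  (forall f g, f \in fam -> g \in fam -> f != g -> free [:: f; g]).

Definition wtF_eq (V : vectType F) (fam : seq V) (v : V) (t : nat) : Prop :=
  (exists I : seq V, [/\ {subset I <= fam}, uniq I, size I = t & v \in <<I>>%VS])
  /\ (forall I : seq V, {subset I <= fam} -> uniq I -> v \in <<I>>%VS ->
        (t <= size I)%N).

Definition e_ (nu : nat) (i : 'I_nu) : 'rV[F]_nu := delta_mx 0 i.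

Definition parent_function (V : vectType F) (nu : nat) (fam : seq V)
  (phi : {linear 'rV[F]_nu -> V}) : Prop :=
  (forall i : 'I_nu, exists2 f, f \in fam & <[phi (e_ i)]>%VS = <[f]>%VS) /\
  (forall f, f \in fam -> exists i : 'I_nu, <[phi (e_ i)]>%VS = <[f]>%VS).

Definition dH (nu : nat) (x y : 'rV[F]_nu) : nat := #|[set i | x 0 i != y 0 i]|.

(* minimum distance of a code; None encodes +infinity (fewer than two codewords) *)
Definition min_dist (nu : nat) (P : {set 'rV[F]_nu}) : option nat :=
  let D := [seq dH xy.1 xy.2 | xy <- [seq (x, y) | x <- enum P, y <- enum P] & xy.1 != xy.2] in
  if D is d :: _ then Some (foldr minn d D) else None.

Definition packing_radius (nu : nat) (P : {set 'rV[F]_nu}) : option nat :=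
  omap (fun d => (d.-1)./2) (min_dist P).

Definition le_ext (t : nat) (r : option nat) : Prop :=
  if r is Some r' then (t <= r')%N else True.

Definition ker_set (V : vectType F) (nu : nat) (phi : {linear 'rV[F]_nu -> V})
  : {set 'rV[F]_nu} := [set x | phi x == 0].

Definition hamming_sphere (nu : nat) (t : nat) (x : 'rV[F]_nu) : {set 'rV[F]_nu} :=
  [set y | dH x y == t].

Definition in_F_sphere (V : vectType F) (fam : seq V) (t : nat) (w u : V) : Prop :=
  exists2 v : V, wtF_eq fam v t & u = w + v.
End Defs.

From HB Require Import structures.
From mathcomp Require Import all_boot all_order all_algebra all_field.
From mathcomp Require Import zify.
Import GRing.Theory.
Local Open Scope ring_scope.
Set Implicit Arguments. Unset Strict Implicit.

(* Since phi maps the basis lines <e_i> bijectively onto the lines of the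
   family, wt_F(v) is the least Hamming weight of a phi-preimage of v.  Two
   preimages of weight at most t <= r differ by a codeword of the parent code
   of weight at most 2t < d_H(P), so they coincide: translating by x, this
   makes phi injective on S^H_t(x) and shows that it maps S^H_t(x) onto
   S^F_t(phi x). *)

Section HammingWeight.
Variables (F : finFieldType) (nu : nat).
Implicit Types z w : 'rV[F]_nu.

Definition supp z := [set i | z 0 i != 0].
Definition wt z := #|supp z|.

Lemma leq_wtD z w : (wt (z + w) <= wt z + wt w)%N.
Proof.
apply: leq_trans (leq_card_setU (supp z) (supp w)).
apply: subset_leq_card; apply/subsetP => i; rewrite !inE mxE.
by apply: contraLR; rewrite negb_or !negbK => /andP[/eqP-> /eqP->]; rewrite addr0.
Qed.

Lemma wtN z : wt (- z) = wt z.
Proof. by apply: eq_card => i; rewrite !inE !mxE oppr_eq0. Qed.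

Lemma wt_gt0 z : (0 < wt z)%N = (z != 0).
Proof.
rewrite lt0n cards_eq0; congr negb; apply/eqP/eqP => [supp0 | ->].
  apply/rowP => i; rewrite mxE; apply/eqP; apply: contraFT (in_set0 i).
  by rewrite -supp0 inE.
by apply/setP => i; rewrite !inE mxE eqxx.
Qed.

Lemma dH_wt z w : dH z w = wt (w - z).
Proof. by apply: eq_card => i; rewrite !inE !mxE subr_eq0 eq_sym. Qed.

End HammingWeight.

Lemma foldr_minn_le d s n : n \in s -> (foldr minn d s <= n)%N.
Proof.
elim: s => // m s IHs; rewrite in_cons => /orP[/eqP-> | /IHs]; first exact: geq_minl.
exact: leq_trans (geq_minr _ _).
Qed.

Section PackingRadius.
Variables (F : finFieldType) (nu : nat) (P : {set 'rV[F]_nu}).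

Lemma min_dist_le x y : x \in P -> y \in P -> x != y ->
  exists2 d, min_dist P = Some d & (d <= dH x y)%N.
Proof.
move=> Px Py neq_xy; rewrite /min_dist; set D := [seq _ | _ <- _ & _].
have D_xy : dH x y \in D.
  apply/mapP; exists (x, y) => //; rewrite mem_filter neq_xy /=.
  by apply/allpairsP; exists (x, y); rewrite !mem_enum.
by case: D D_xy => // d D D_xy; exists (foldr minn d (d :: D)); rewrite ?foldr_minn_le.
Qed.

Lemma packing_radius_lt_dH t x y : le_ext t (packing_radius P) ->
  x \in P -> y \in P -> x != y -> (t.*2 < dH x y)%N.
Proof.
move=> le_t_r Px Py neq_xy.
have dH_gt0 : (0 < dH x y)%N by rewrite dH_wt wt_gt0 subr_eq0 eq_sym.
have [d min_d le_d] := min_dist_le Px Py neq_xy.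
move: le_t_r; rewrite /packing_radius min_d /= -leq_double => le_t.
have := odd_double_half d.-1; lia.
Qed.

End PackingRadius.

Section ParentCode.
Variables (F : finFieldType) (V : vectType F) (nu : nat) (t : nat).
Variable phi : {linear 'rV[F]_nu -> V}.
Hypothesis le_t_r : le_ext t (packing_radius (ker_set phi)).

Lemma ker_wt_gt w : phi w = 0 -> w != 0 -> (t.*2 < wt w)%N.
Proof.
move=> phi_w nz_w; rewrite -[w]subr0 -dH_wt.
by apply: (packing_radius_lt_dH le_t_r); rewrite ?inE ?phi_w ?linear0 // eq_sym.
Qed.

Lemma low_wt_preimage_uniq z w :
  (wt z <= t)%N -> (wt w <= t)%N -> phi z = phi w -> z = w.
Proof.
move=> wt_z wt_w eq_phi; apply/eqP; rewrite -subr_eq0; apply: contraT => nz.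
have ker_zw : phi (z - w) = 0 by rewrite linearB eq_phi subrr.
have := ker_wt_gt ker_zw nz; have := leq_wtD z (- w); rewrite wtN; lia.
Qed.

End ParentCode.

Section ParentFunction.
Variables (F : finFieldType) (V : vectType F) (nu : nat) (fam : seq V).
Variable phi : {linear 'rV[F]_nu -> V}.
Hypotheses (fam_proj : proj_point_family fam) (size_fam : size fam = nu).
Hypothesis phi_parent : parent_function fam phi.

Definition parent_point (i : 'I_nu) : V :=
  nth 0 fam (find (fun f => <[phi (e_ F i)]>%VS == <[f]>%VS) fam).

Lemma parent_pointP i :
  parent_point i \in fam /\ <[phi (e_ F i)]>%VS = <[parent_point i]>%VS.
Proof.
have [f fam_f line_f] := phi_parent.1 i.
have has_line : has (fun f => <[phi (e_ F i)]>%VS == <[f]>%VS) fam.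
  by apply/hasP; exists f => //; apply/eqP.
by split; [rewrite mem_nth // -has_find | exact/eqP/(nth_find 0 has_line)].
Qed.

Lemma fam_line_inj f g : f \in fam -> g \in fam -> <[f]>%VS = <[g]>%VS -> f = g.
Proof.
move=> fam_f fam_g eq_line; apply/eqP; apply: contraT => neq_fg.
have := fam_proj.2.2 _ _ fam_f fam_g neq_fg.
by rewrite /free !span_cons span_nil addv0 eq_line addvv dim_vline; case: (g != 0).
Qed.

Lemma parent_point_surj f : f \in fam -> exists i, parent_point i = f.
Proof.
move=> fam_f; have [i line_i] := phi_parent.2 f fam_f.
have [fam_pi line_pi] := parent_pointP i.
by exists i; apply: fam_line_inj; rewrite // -line_pi.
Qed.

Lemma parent_point_inj : injective parent_point.
Proof.
apply/injectiveP; apply: (leq_size_uniq fam_proj.1).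
  by move=> f /parent_point_surj[i <-]; apply: map_f; rewrite mem_enum.
by rewrite size_map -cardE card_ord size_fam.
Qed.

Lemma span_preimage_supp (I : seq V) v : {subset I <= fam} -> v \in <<I>>%VS ->
  exists2 z, phi z = v & supp z \subset [set i | parent_point i \in I].
Proof.
elim: I v => [|f I IHI] v sub_I.
  rewrite span_nil memv0 => /eqP->; exists 0; first exact: linear0.
  by apply/subsetP => i; rewrite !inE mxE eqxx.
rewrite span_cons => /memv_addP[_ /vlineP[k ->] [u u_I ->]].
have [zu <- supp_zu] := IHI u (fun g g_I => sub_I g (mem_behead (g_I : g \in behead (f :: I)))) u_I.
have [i pi_f] := parent_point_surj (sub_I f (mem_head f I)).
have : parent_point i \in <[phi (e_ F i)]>%VS by rewrite (parent_pointP i).2 memv_line.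
case/vlineP => c e_f.
exists ((k * c) *: e_ F i + zu); first by rewrite linearP -pi_f e_f scalerA.
apply/subsetP => j; rewrite !inE !mxE.
have [-> | neq_ji] := eqVneq j i; first by rewrite pi_f !eqxx.
rewrite andbF mulr0 add0r => zu_j.
by have := subsetP supp_zu j; rewrite !inE => /(_ zu_j) ->; rewrite orbT.
Qed.

Lemma span_preimage (I : seq V) v : {subset I <= fam} -> v \in <<I>>%VS ->
  exists2 z, phi z = v & (wt z <= size I)%N.
Proof.
move=> sub_I /(span_preimage_supp sub_I)[z phi_z supp_z]; exists z => //.
apply: leq_trans (subset_leq_card supp_z) _.
rewrite cardE -(size_map parent_point); apply: uniq_leq_size.
  by rewrite (map_inj_uniq parent_point_inj) enum_uniq.
by move=> y /mapP[i]; rewrite mem_enum inE => I_i ->.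
Qed.

Lemma phi_mem_span_supp z :
  let I := map parent_point (enum (supp z)) in
  [/\ {subset I <= fam}, uniq I, size I = wt z & phi z \in <<I>>%VS].
Proof.
split.
- by move=> _ /mapP[i _ ->]; exact: (parent_pointP i).1.
- by rewrite (map_inj_uniq parent_point_inj) enum_uniq.
- by rewrite size_map -cardE.
rewrite {1}(row_sum_delta z) linear_sum; apply: memv_suml => i _.
rewrite linearZ_LR; have [-> | nz_i] := eqVneq (z 0 i) 0; first by rewrite scale0r mem0v.
have : phi (e_ F i) \in <[parent_point i]>%VS by rewrite -(parent_pointP i).2 memv_line.
by case/vlineP => c ->; rewrite !memvZ // memv_span // map_f // mem_enum inE.
Qed.

Lemma wtF_eqP v n : wtF_eq fam v n <->
  (exists2 z, phi z = v & wt z = n) /\ (forall z, phi z = v -> (n <= wt z)%N).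
Proof.
split=> [[[I [sub_I _ <- v_I]] min_I] | [[z phi_z <-] min_z]].
  have min_wt z : phi z = v -> (size I <= wt z)%N.
    by move=> phi_z; have [? ? <-] := phi_mem_span_supp z; rewrite phi_z; exact: min_I.
  split=> //; have [z phi_z wt_z] := span_preimage sub_I v_I.
  by exists z => //; apply/eqP; rewrite eqn_leq wt_z min_wt.
split=> [|I sub_I _ v_I]; first by exists (map parent_point (enum (supp z)));
  have [? ? ? ?] := phi_mem_span_supp z; rewrite -phi_z.
by have [w phi_w wt_w] := span_preimage sub_I v_I; exact: leq_trans (min_z w phi_w) wt_w.
Qed.

End ParentFunction.

Theorem proposition6p1 (F : finFieldType) (V : vectType F) (nu : nat)
  (fam : seq V) (phi : {linear 'rV[F]_nu -> V}) (x : 'rV[F]_nu) (t : nat) :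
  proj_point_family fam -> size fam = nu ->
  parent_function fam phi ->
  le_ext t (packing_radius (ker_set phi)) ->
  {in hamming_sphere t x &, injective phi} /\
  (forall u : V, (exists2 y, y \in hamming_sphere t x & phi y = u) <->
                 in_F_sphere fam t (phi x) u).
Proof.
move=> fam_proj size_fam phi_parent le_t_r.
have uniq_low := low_wt_preimage_uniq le_t_r.
have wtF := wtF_eqP fam_proj size_fam phi_parent.
split=> [y1 y2 | u].
  rewrite !inE !dH_wt => /eqP wt_y1 /eqP wt_y2 eq_phi.
  apply: (addIr (- x)); apply: uniq_low; rewrite ?wt_y1 ?wt_y2 //.
  by rewrite !linearB eq_phi.
split=> [[y] | [v /wtF[[z phi_z wt_z] _] ->]].
  rewrite inE dH_wt => /eqP wt_yx <-.
  exists (phi (y - x)); last by rewrite linearB addrC subrK.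
  apply/wtF; split=> [|z phi_z]; first by exists (y - x).
  have [// | lt_z] := leqP t (wt z).
  have eq_z : z = y - x by apply: uniq_low; rewrite ?wt_yx ?phi_z // ltnW.
  by rewrite eq_z wt_yx ltnn in lt_z.
exists (x + z); last by rewrite linearD phi_z.
by rewrite inE dH_wt addrC addKr wt_z.
Qed.
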